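(* Let $n\ge3$ be odd, $n_1=(n+1)/2$, and let $\widehat Z=\mathrm{diag}(\widehat Z_1,\dots,\widehat Z_d)$ with $\widehat Z_i\in\mathbb C^{n_1\times n_1}$ satisfy $\max_{p\in[n_1]}\frac1d\sum_{i=1}^d\|e_p^{\mathsf T}\widehat Z_i\|_2^2\le B$. Then $$\frac1d\sum_{i=1}^d\sum_{k=1}^n\frac1{w_k}\big|\langle\widehat Z_i,G_k\rangle\big|^2\le C\,B\log(n_1)$$ for an absolute constant $C>0$.
   Context: For $a\in[n]$, $w_a=\#\{(j,k)\in[n_1]\times[n_1]:j+k=a+1\}$ and $G_a=w_a^{-1/2}\sum_{j+k=a+1}e_je_k^{\mathsf T}\in\mathbb R^{n_1\times n_1}$. Inner product $\langle A,B\rangle=\mathrm{tr}(AB^{\mathsf H})$. *)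

From Stdlib Require Import Reals Arith.
Open Scope R_scope.

Definition Cx : Type := (R * R)%type.
Definition C0 : Cx := (0, 0).
Definition Cadd (x y : Cx) : Cx := (fst x + fst y, snd x + snd y).
Definition Cmul (x y : Cx) : Cx :=
  (fst x * fst y - snd x * snd y, fst x * snd y + snd x * fst y).
Definition Cconj (x : Cx) : Cx := (fst x, - snd x).
Definition RtoC (r : R) : Cx := (r, 0).
Definition Cnorm2 (x : Cx) : R := fst x * fst x + snd x * snd x.

Fixpoint rsum (m : nat) (f : nat -> R) : R :=
  match m with O => 0 | S m' => rsum m' f + f m' end.
Fixpoint csum (m : nat) (f : nat -> Cx) : Cx :=
  match m with O => C0 | S m' => Cadd (csum m' f) (f m') end.

(* square complex matrices of size n1, indices 0 .. n1-1
   (entries outside this range are irrelevant) *)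
Definition cmat : Type := nat -> nat -> Cx.

Definition cinner (n1 : nat) (A B : cmat) : Cx :=
  csum n1 (fun j => csum n1 (fun k => Cmul (A j k) (Cconj (B j k)))).

Definition rownorm2 (n1 : nat) (A : cmat) (p : nat) : R :=
  rsum n1 (fun k => Cnorm2 (A p k)).

(* With 0-based indices j,k in {0..n1-1} and a in {0..n-1}, the paper's
   condition j+k = a+1 (1-based) becomes j+k = a. *)
Definition wt (n1 a : nat) : nat :=
  List.length (List.filter (fun jk => Nat.eqb (fst jk + snd jk) a)
    (List.list_prod (List.seq 0 n1) (List.seq 0 n1))).

Definition Gmat (n1 a : nat) : cmat :=
  fun j k => if Nat.eqb (j + k) a then RtoC (/ sqrt (INR (wt n1 a))) else C0.

(* On the k-th antidiagonal, Cauchy-Schwarz gives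
   w_k^{-1} |<Z, G_k>|^2 <= w_k^{-1} \sum_{j+l=k} |Z_{jl}|^2, and
   w_{j+l} >= min (j+1, n1-j), so the whole sum over k is at most
   \sum_j (1/(j+1) + 1/(n1-j)) ||e_j^T Z||^2.  Averaging over the blocks, each
   row contributes at most B, and \sum_j (1/(j+1) + 1/(n1-j)) = 2 H_{n1}
   <= 2 (1 + ln n1) <= 6 ln n1 because ln n1 >= ln 2 > 1/2. *)
From Stdlib Require Import Reals Arith Lia Lra List.
Open Scope R_scope.

Lemma rsum_ext m f g :
  (forall x, (x < m)%nat -> f x = g x) -> rsum m f = rsum m g.
Proof.
  induction m as [|m IH]; intros Hfg; [reflexivity|]; cbn [rsum].
  rewrite IH by (intros; apply Hfg; lia); rewrite Hfg by lia; reflexivity.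
Qed.

Lemma rsum_plus m f g : rsum m (fun x => f x + g x) = rsum m f + rsum m g.
Proof. induction m as [|m IH]; cbn [rsum]; [ring|]; rewrite IH; ring. Qed.

Lemma rsum_scal m c f : rsum m (fun x => c * f x) = c * rsum m f.
Proof. induction m as [|m IH]; cbn [rsum]; [ring|]; rewrite IH; ring. Qed.

Lemma rsum_le m f g :
  (forall x, (x < m)%nat -> f x <= g x) -> rsum m f <= rsum m g.
Proof.
  induction m as [|m IH]; intros Hfg; cbn [rsum]; [lra|].
  apply Rplus_le_compat; [apply IH; intros x Hx|]; apply Hfg; lia.
Qed.

Lemma rsum_nonneg m f : (forall x, (x < m)%nat -> 0 <= f x) -> 0 <= rsum m f.
Proof.
  intros Hf; replace 0 with (rsum m (fun _ => 0)) by
    (induction m; cbn [rsum]; [reflexivity | rewrite IHm by auto; ring]).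
  now apply rsum_le.
Qed.

Lemma rsum_ge_term m f i :
  (forall x, (x < m)%nat -> 0 <= f x) -> (i < m)%nat -> f i <= rsum m f.
Proof.
  induction m as [|m IH]; intros Hf Hi; [lia|]; cbn [rsum].
  destruct (Nat.eq_dec i m) as [->|Him].
  - assert (0 <= rsum m f) by (apply rsum_nonneg; intros; apply Hf; lia); lra.
  - assert (f i <= rsum m f) by (apply IH; [intros; apply Hf|]; lia).
    specialize (Hf m (Nat.lt_succ_diag_r m)); lra.
Qed.

Lemma rsum_swap a b (f : nat -> nat -> R) :
  rsum a (fun i => rsum b (f i)) = rsum b (fun j => rsum a (fun i => f i j)).
Proof.
  induction a as [|a IH]; cbn [rsum].
  - induction b; cbn [rsum]; [reflexivity | rewrite <- IHb; ring].
  - now rewrite IH, <- rsum_plus.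
Qed.

Lemma rsum_shift m f : rsum (S m) f = f 0%nat + rsum m (fun j => f (S j)).
Proof.
  induction m as [|m IH]; [cbn; ring|].
  change (rsum (S (S m)) f) with (rsum (S m) f + f (S m)).
  rewrite IH; cbn [rsum]; ring.
Qed.

Lemma rsum_rev m f : rsum m (fun j => f (m - S j)%nat) = rsum m f.
Proof.
  induction m as [|m IH]; [reflexivity|].
  rewrite rsum_shift, Nat.sub_1_r; cbn [Nat.pred rsum].
  change (fun j => f (S m - S (S j))%nat) with (fun j => f (m - S j)%nat).
  rewrite IH; ring.
Qed.

Lemma rsum_kronecker m i f :
  (i < m)%nat -> rsum m (fun k => (if (i =? k)%nat then 1 else 0) * f k) = f i.
Proof.
  induction m as [|m IH]; intros Hi; [lia|]; cbn [rsum].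
  destruct (Nat.eqb_spec i m) as [->|Him].
  - rewrite (rsum_ext m _ (fun _ => 0 * 0)), rsum_scal; [ring|].
    intros k Hk; destruct (Nat.eqb_spec m k); [lia | ring].
  - rewrite IH by lia; ring.
Qed.

Lemma rsum_interval_count N lo hi :
  rsum N (fun j => if andb (lo <=? j)%nat (j <=? hi)%nat then 1 else 0)
  = INR (Nat.min N (S hi) - lo).
Proof.
  induction N as [|N IH]; [reflexivity|]; cbn [rsum]; rewrite IH.
  destruct (Nat.leb_spec lo N), (Nat.leb_spec N hi); cbn [andb];
    first [ replace (Nat.min (S N) (S hi) - lo)%nat
              with (S (Nat.min N (S hi) - lo)) by lia; rewrite S_INR; reflexivity
          | replace (Nat.min (S N) (S hi) - lo)%nat
              with (Nat.min N (S hi) - lo)%nat by lia; ring ].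
Qed.

Definition rsum2 (m : nat) (f : nat -> nat -> R) : R :=
  rsum m (fun j => rsum m (f j)).

Lemma rsum2_ext m f g :
  (forall j l, (j < m)%nat -> (l < m)%nat -> f j l = g j l) ->
  rsum2 m f = rsum2 m g.
Proof. intros Hfg; apply rsum_ext; intros; apply rsum_ext; auto. Qed.

Lemma rsum2_plus m f g :
  rsum2 m (fun j l => f j l + g j l) = rsum2 m f + rsum2 m g.
Proof. unfold rsum2; rewrite <- rsum_plus; apply rsum_ext; intros; apply rsum_plus. Qed.

Lemma rsum2_scal m c f : rsum2 m (fun j l => c * f j l) = c * rsum2 m f.
Proof. unfold rsum2; rewrite <- rsum_scal; apply rsum_ext; intros; apply rsum_scal. Qed.

Lemma rsum2_le m f g :
  (forall j l, (j < m)%nat -> (l < m)%nat -> f j l <= g j l) ->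
  rsum2 m f <= rsum2 m g.
Proof. intros Hfg; apply rsum_le; intros; apply rsum_le; auto. Qed.

Lemma rsum2_nonneg m f :
  (forall j l, (j < m)%nat -> (l < m)%nat -> 0 <= f j l) -> 0 <= rsum2 m f.
Proof. intros Hf; apply rsum_nonneg; intros; apply rsum_nonneg; auto. Qed.

Lemma rsum_rsum2 n m (f : nat -> nat -> nat -> R) :
  rsum n (fun k => rsum2 m (f k)) = rsum2 m (fun j l => rsum n (fun k => f k j l)).
Proof.
  unfold rsum2; rewrite rsum_swap; apply rsum_ext; intros; apply rsum_swap.
Qed.

Lemma discriminant_le A S Q :
  0 < A -> (forall t, 0 <= Q - 2 * t * S + t ^ 2 * A) -> S ^ 2 <= A * Q.
Proof.
  intros HA Hquad; specialize (Hquad (S / A)).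
  assert (0 <= A * (Q - 2 * (S / A) * S + (S / A) ^ 2 * A))
    by (apply Rmult_le_pos; lra).
  replace (A * (Q - 2 * (S / A) * S + (S / A) ^ 2 * A)) with (A * Q - S ^ 2)
    in H by (field; lra).
  lra.
Qed.

Lemma rsum2_cauchy_schwarz m a u :
  (forall j l, (j < m)%nat -> (l < m)%nat -> 0 <= a j l) -> 0 < rsum2 m a ->
  (rsum2 m (fun j l => a j l * u j l)) ^ 2
  <= rsum2 m a * rsum2 m (fun j l => a j l * u j l ^ 2).
Proof.
  intros Ha HA; apply discriminant_le; [exact HA|]; intros t.
  replace (rsum2 m (fun j l => a j l * u j l ^ 2)
           - 2 * t * rsum2 m (fun j l => a j l * u j l) + t ^ 2 * rsum2 m a)
    with (rsum2 m (fun j l => a j l * (u j l - t) ^ 2)).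
  - apply rsum2_nonneg; intros; apply Rmult_le_pos; [auto | apply pow2_ge_0].
  - rewrite (rsum2_ext m _ (fun j l => a j l * u j l ^ 2 + (- 2 * t) * (a j l * u j l)
                                      + t ^ 2 * a j l)) by (intros; ring).
    rewrite 2!rsum2_plus, 2!rsum2_scal; ring.
Qed.

Definition antidiag (k j l : nat) : R := if (j + l =? k)%nat then 1 else 0.

Lemma antidiag_nonneg k j l : 0 <= antidiag k j l.
Proof. unfold antidiag; destruct (_ =? _)%nat; lra. Qed.

Lemma list_prod_app {A B : Type} (L1 L2 : list A) (M : list B) :
  list_prod (L1 ++ L2) M = list_prod L1 M ++ list_prod L2 M.
Proof. induction L1; cbn; [reflexivity | now rewrite IHL1, app_assoc]. Qed.

Lemma INR_length_filter_map_pair (p : nat * nat -> bool) x m :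
  INR (length (filter p (map (pair x) (seq 0 m))))
  = rsum m (fun l => if p (x, l) then 1 else 0).
Proof.
  induction m as [|m IH]; [reflexivity|].
  rewrite seq_S, map_app, filter_app, length_app, plus_INR, IH; cbn.
  destruct (p (x, m)); cbn; ring.
Qed.

Lemma INR_length_filter_list_prod (p : nat * nat -> bool) m1 m2 :
  INR (length (filter p (list_prod (seq 0 m1) (seq 0 m2))))
  = rsum m1 (fun j => rsum m2 (fun l => if p (j, l) then 1 else 0)).
Proof.
  induction m1 as [|m1 IH]; [reflexivity|].
  rewrite seq_S, list_prod_app, filter_app, length_app, plus_INR, IH; cbn.
  now rewrite app_nil_r, INR_length_filter_map_pair.
Qed.

Lemma INR_wt n1 k : INR (wt n1 k) = rsum2 n1 (antidiag k).
Proof. apply INR_length_filter_list_prod. Qed.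

(* [min (k+1) (2 n1 - 1 - k)] is in fact the exact value of [wt n1 k]. *)
Lemma wt_ge n1 k : (Nat.min (S k) (2 * n1 - 1 - k) <= wt n1 k)%nat.
Proof.
  apply INR_le; rewrite INR_wt.
  apply Rle_trans with
    (rsum n1 (fun j => if andb (S k - n1 <=? j)%nat (j <=? k)%nat then 1 else 0)).
  - rewrite rsum_interval_count; apply Req_le; f_equal; lia.
  - apply rsum_le; intros j Hj.
    destruct (Nat.leb_spec (S k - n1) j), (Nat.leb_spec j k); cbn [andb];
      try (apply rsum_nonneg; intros; apply antidiag_nonneg).
    replace 1 with (antidiag k j (k - j)) by
      (unfold antidiag; replace (j + (k - j))%nat with k by lia;
       now rewrite Nat.eqb_refl).
    apply rsum_ge_term; [intros; apply antidiag_nonneg | lia].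
Qed.

Definition row_weight (n1 j : nat) : R := / INR (S j) + / INR (n1 - j).

Lemma inv_INR_pos n : (0 < n)%nat -> 0 < / INR n.
Proof. intros Hn; apply Rinv_0_lt_compat, lt_0_INR, Hn. Qed.

Lemma row_weight_nonneg n1 j : (j < n1)%nat -> 0 <= row_weight n1 j.
Proof.
  intros Hj; unfold row_weight.
  pose proof (inv_INR_pos (S j) ltac:(lia)).
  pose proof (inv_INR_pos (n1 - j) ltac:(lia)).
  lra.
Qed.

Lemma inv_wt_le_row_weight n1 j l :
  (j < n1)%nat -> (l < n1)%nat -> / INR (wt n1 (j + l)) <= row_weight n1 j.
Proof.
  intros Hj Hl; pose proof (wt_ge n1 (j + l)) as Hwt; unfold row_weight.
  pose proof (inv_INR_pos (S j) ltac:(lia)).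
  pose proof (inv_INR_pos (n1 - j) ltac:(lia)).
  assert (Hcase : (S j <= wt n1 (j + l))%nat \/ (n1 - j <= wt n1 (j + l))%nat)
    by lia.
  destruct Hcase as [Hw|Hw]; apply le_INR in Hw;
    [ assert (/ INR (wt n1 (j + l)) <= / INR (S j))
    | assert (/ INR (wt n1 (j + l)) <= / INR (n1 - j)) ];
    try (apply Rinv_le_contravar; [apply lt_0_INR; lia | exact Hw]); lra.
Qed.

Lemma Cnorm2_nonneg z : 0 <= Cnorm2 z.
Proof. unfold Cnorm2; nra. Qed.

Lemma rownorm2_nonneg n1 Z p : 0 <= rownorm2 n1 Z p.
Proof. apply rsum_nonneg; intros; apply Cnorm2_nonneg. Qed.

Lemma fst_csum m f : fst (csum m f) = rsum m (fun x => fst (f x)).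
Proof. induction m as [|m IH]; cbn; [reflexivity | now rewrite IH]. Qed.

Lemma snd_csum m f : snd (csum m f) = rsum m (fun x => snd (f x)).
Proof. induction m as [|m IH]; cbn; [reflexivity | now rewrite IH]. Qed.

Lemma cinner_Gmat n1 Z k :
  cinner n1 Z (Gmat n1 k) =
  (/ sqrt (INR (wt n1 k)) * rsum2 n1 (fun j l => antidiag k j l * fst (Z j l)),
   / sqrt (INR (wt n1 k)) * rsum2 n1 (fun j l => antidiag k j l * snd (Z j l))).
Proof.
  unfold cinner, rsum2; apply injective_projections; cbn [fst snd];
    rewrite ?fst_csum, ?snd_csum, <- rsum_scal; apply rsum_ext; intros j _;
    rewrite ?fst_csum, ?snd_csum, <- rsum_scal; apply rsum_ext; intros l _;
    unfold Gmat, antidiag, Cmul, Cconj, RtoC, C0;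
    destruct (j + l =? k)%nat; cbn; ring.
Qed.

Lemma Cnorm2_cinner_Gmat_le n1 Z k :
  (0 < wt n1 k)%nat ->
  Cnorm2 (cinner n1 Z (Gmat n1 k))
  <= rsum2 n1 (fun j l => antidiag k j l * Cnorm2 (Z j l)).
Proof.
  intros Hwt; rewrite cinner_Gmat; unfold Cnorm2 at 1; cbn [fst snd].
  assert (Hw : 0 < INR (wt n1 k)) by (apply lt_0_INR; exact Hwt).
  pose proof (rsum2_cauchy_schwarz n1 (antidiag k) (fun j l => fst (Z j l))
                (fun j l _ _ => antidiag_nonneg k j l)) as CSre.
  pose proof (rsum2_cauchy_schwarz n1 (antidiag k) (fun j l => snd (Z j l))
                (fun j l _ _ => antidiag_nonneg k j l)) as CSim.
  rewrite <- INR_wt in CSre, CSim; specialize (CSre Hw); specialize (CSim Hw).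
  rewrite (rsum2_ext n1 (fun j l => antidiag k j l * Cnorm2 (Z j l))
             (fun j l => antidiag k j l * fst (Z j l) ^ 2
                                     + antidiag k j l * snd (Z j l) ^ 2))
    by (intros; unfold Cnorm2; ring).
  rewrite rsum2_plus.
  set (w := INR (wt n1 k)) in *; cbv beta in CSre, CSim.
  set (SR := rsum2 n1 (fun j l => antidiag k j l * fst (Z j l))) in *.
  set (SI := rsum2 n1 (fun j l => antidiag k j l * snd (Z j l))) in *.
  set (QR := rsum2 n1 (fun j l => antidiag k j l * fst (Z j l) ^ 2)) in *.
  set (QI := rsum2 n1 (fun j l => antidiag k j l * snd (Z j l) ^ 2)) in *.
  assert (Hsq : / sqrt w * / sqrt w = / w)
    by (rewrite <- Rinv_mult, sqrt_sqrt; lra).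
  replace (/ sqrt w * SR * (/ sqrt w * SR) + / sqrt w * SI * (/ sqrt w * SI))
    with (/ w * (SR ^ 2 + SI ^ 2)) by (rewrite <- Hsq; ring).
  apply Rle_trans with (/ w * (w * QR + w * QI)).
  - apply Rmult_le_compat_l; [apply Rlt_le, Rinv_0_lt_compat, Hw | lra].
  - apply Req_le; field; lra.
Qed.

Lemma sum_antidiag_le_rows n1 Z :
  rsum (2 * n1 - 1) (fun k => / INR (wt n1 k) * Cnorm2 (cinner n1 Z (Gmat n1 k)))
  <= rsum n1 (fun j => row_weight n1 j * rownorm2 n1 Z j).
Proof.
  apply Rle_trans with (rsum (2 * n1 - 1) (fun k =>
    rsum2 n1 (fun j l => antidiag k j l * (row_weight n1 j * Cnorm2 (Z j l))))).
  - apply rsum_le; intros k Hk.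
    assert (Hwt : (0 < wt n1 k)%nat) by (pose proof (wt_ge n1 k); lia).
    apply Rle_trans with
      (/ INR (wt n1 k) * rsum2 n1 (fun j l => antidiag k j l * Cnorm2 (Z j l))).
    { apply Rmult_le_compat_l; [apply Rlt_le, inv_INR_pos, Hwt|].
      now apply Cnorm2_cinner_Gmat_le. }
    rewrite <- rsum2_scal; apply rsum2_le; intros j l Hj Hl; unfold antidiag.
    destruct (Nat.eqb_spec (j + l) k) as [<-|_]; [|right; ring].
    rewrite !Rmult_1_l; apply Rmult_le_compat_r;
      [apply Cnorm2_nonneg | now apply inv_wt_le_row_weight].
  - apply Req_le; rewrite rsum_rsum2; unfold rsum2, rownorm2.
    apply rsum_ext; intros j Hj; rewrite <- rsum_scal; apply rsum_ext; intros l Hl.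
    apply (rsum_kronecker _ (j + l) (fun _ => row_weight n1 j * Cnorm2 (Z j l))).
    lia.
Qed.

Lemma average_rows_le d n1 (Z : nat -> cmat) c B :
  (forall j, (j < n1)%nat -> 0 <= c j) ->
  (forall p, (p < n1)%nat -> / INR d * rsum d (fun i => rownorm2 n1 (Z i) p) <= B) ->
  / INR d * rsum d (fun i => rsum n1 (fun j => c j * rownorm2 n1 (Z i) j))
  <= B * rsum n1 c.
Proof.
  intros Hc HB; rewrite rsum_swap, <- rsum_scal, <- rsum_scal.
  apply rsum_le; intros j Hj; rewrite rsum_scal.
  replace (/ INR d * (c j * rsum d (fun i => rownorm2 n1 (Z i) j)))
    with (c j * (/ INR d * rsum d (fun i => rownorm2 n1 (Z i) j))) by ring.
  rewrite (Rmult_comm B); apply Rmult_le_compat_l; auto.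
Qed.

Lemma inv_succ_le_ln_diff m :
  (1 <= m)%nat -> / INR (S m) <= ln (INR (S m)) - ln (INR m).
Proof.
  intros Hm; assert (Hx : 0 < INR m) by (apply lt_0_INR; lia).
  rewrite S_INR; set (x := INR m) in *.
  assert (Hratio : 0 < x / (x + 1)) by (apply Rdiv_lt_0_compat; lra).
  assert (Hln : ln x = ln (x + 1) + ln (x / (x + 1)))
    by (rewrite <- ln_mult by lra; f_equal; field; lra).
  (* [ln y <= y - 1] at [y = x / (x + 1)] *)
  pose proof (exp_ineq1_le (ln (x / (x + 1)))) as Hexp.
  rewrite exp_ln in Hexp by exact Hratio.
  assert (x / (x + 1) - 1 = - / (x + 1)) by (field; lra).
  lra.
Qed.

Lemma harmonic_le_ln m :
  (1 <= m)%nat -> rsum m (fun j => / INR (S j)) <= 1 + ln (INR m).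
Proof.
  induction m as [|[|m] IH]; intros Hm; [lia | cbn; rewrite ln_1; lra|].
  change (rsum (S (S m)) (fun j => / INR (S j)))
    with (rsum (S m) (fun j => / INR (S j)) + / INR (S (S m))).
  pose proof (IH ltac:(lia)); pose proof (inv_succ_le_ln_diff (S m) ltac:(lia)).
  lra.
Qed.

Lemma sum_row_weight_le n1 :
  (1 <= n1)%nat -> rsum n1 (row_weight n1) <= 2 * (1 + ln (INR n1)).
Proof.
  intros Hn1; unfold row_weight; rewrite rsum_plus.
  rewrite (rsum_ext n1 (fun j => / INR (n1 - j)) (fun j => / INR (S (n1 - S j))))
    by (intros; do 2 f_equal; lia).
  rewrite (rsum_rev n1 (fun j => / INR (S j))).
  pose proof (harmonic_le_ln n1 Hn1); lra.
Qed.

Lemma half_le_ln n : (2 <= n)%nat -> / 2 <= ln (INR n).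
Proof.
  intros Hn; apply le_INR in Hn; change (INR 2) with 2 in Hn.
  pose proof ln_lt_2.
  destruct (Rle_lt_or_eq_dec _ _ Hn) as [Hlt | <-]; [|lra].
  pose proof (ln_increasing 2 _ ltac:(lra) Hlt); lra.
Qed.

Theorem lemmaC2 :
  exists C : R, 0 < C /\
  forall (n d : nat) (Z : nat -> cmat) (B : R),
    (3 <= n)%nat -> Nat.Odd n -> (1 <= d)%nat ->
    let n1 := ((n + 1) / 2)%nat in
    (forall p : nat, (p < n1)%nat ->
        / INR d * rsum d (fun i => rownorm2 n1 (Z i) p) <= B) ->
    / INR d * rsum d (fun i =>
        rsum n (fun k => / INR (wt n1 k) * Cnorm2 (cinner n1 (Z i) (Gmat n1 k))))
    <= C * B * ln (INR n1).
Proof.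
  exists 6; split; [lra|]; intros n d Z B Hn [m ->] Hd n1 HB.
  assert (Hn1 : n1 = S m).
  { unfold n1; replace (2 * m + 1 + 1)%nat with (S m * 2)%nat by lia.
    apply Nat.div_mul; lia. }
  clearbody n1; subst n1.
  replace (2 * m + 1)%nat with (2 * S m - 1)%nat by lia.
  assert (HB0 : 0 <= B).
  { eapply Rle_trans; [|apply (HB 0%nat); lia].
    apply Rmult_le_pos; [apply Rlt_le, inv_INR_pos; lia|].
    apply rsum_nonneg; intros; apply rownorm2_nonneg. }
  apply Rle_trans with
    (/ INR d * rsum d (fun i => rsum (S m) (fun j => row_weight (S m) j * rownorm2 (S m) (Z i) j))).
  { apply Rmult_le_compat_l; [apply Rlt_le, inv_INR_pos; lia|].
    apply rsum_le; intros; apply sum_antidiag_le_rows. }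
  eapply Rle_trans; [apply average_rows_le; [apply row_weight_nonneg | exact HB]|].
  pose proof (sum_row_weight_le (S m) ltac:(lia)).
  pose proof (half_le_ln (S m) ltac:(lia)).
  nra.
Qed.
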